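(* Let $(X_n)_{n\in\mathbb{Z}}$ be $L_2$-NED with constants $\nu(k)$, $k\in\mathbb{N}$, on a stationary process $(Z_n)_{n\in\mathbb{Z}}$, and let $g:\mathbb{R}\to\mathbb{R}$ be a function bounded by $K$ that satisfies the 2-variation condition (with respect to the distribution of $X_0$) with constant $L$. Then $(g(X_n))_{n\in\mathbb{Z}}$ is $L_2$-NED on $(Z_n)$ with constants $\sqrt{(L+4K^2)\nu(k)}$, $k\in\mathbb{N}$.
   Context: $\mathcal{F}_{Z,s,t}=\sigma(Z_u:s\le u\le t)$. A stationary process $(Y_n)$ is $L_2$-NED on $(Z_n)$ with constants $\nu(k)$ if $\|Y_0-\mathbb{E}[Y_0\mid\mathcal{F}_{Z,-k,k}]\|_2\le\nu(k)$ for $k\ge0$, with $\nu(k)\to0$. A function $g$ satisfies the $p$-variation condition with respect to the distribution of $X_0$ with constant $c$ if for every $\epsilon>0$, $\mathbb{E}[\sup_{x\in\mathbb{R}:|x-X_0|\le\epsilon}|g(x)-g(X_0)|^p]\le c\,\epsilon^p$. *)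

From HB Require Import structures.
From mathcomp Require Import all_boot all_order all_algebra.
From mathcomp Require Import all_classical all_reals all_analysis.
Set Implicit Arguments. Unset Strict Implicit. Unset Printing Implicit Defensive.
Import Order.TTheory GRing.Theory Num.Theory.
Local Open Scope classical_set_scope.
Local Open Scope ring_scope.

Section NED.
Context {R : realType} {d : measure_display} {T : measurableType d}.
Variable P : probability T R.

Definition stationary {dS : measure_display} {S : measurableType dS}
  (Y : int -> T -> S) : Prop :=
  (forall n, measurable_fun setT (Y n)) /\
  forall (m : nat) (t : 'I_m -> int) (B : 'I_m -> set S) (h : int),
    (forall i, measurable (B i)) ->
    P (\bigcap_i (Y (t i + h) @^-1` B i)) = P (\bigcap_i (Y (t i) @^-1` B i)).

Definition F_Z {dS : measure_display} {S : measurableType dS}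
  (Z : int -> T -> S) (s t : int) : set (set T) :=
  <<s [set A | exists u, exists B, [/\ s <= u <= t, measurable B &
                                       A = Z u @^-1` B] ] >>.

Definition is_condexp (F : set (set T)) (Y W : T -> R) : Prop :=
  P.-integrable setT (EFin \o Y) /\
  (forall B : set R, measurable B -> F (W @^-1` B)) /\
  P.-integrable setT (EFin \o W) /\
  forall A, F A -> (\int[P]_(x in A) (Y x)%:E = \int[P]_(x in A) (W x)%:E)%E.

Definition L2dist (Y W : T -> R) : \bar R :=
  Lnorm P 2%:E (EFin \o (fun x => Y x - W x)).

Definition L2NED {dS : measure_display} {S : measurableType dS}
  (Y : int -> T -> R) (Z : int -> T -> S) (nu : nat -> R) : Prop :=
  stationary Y /\ nu @ \oo --> 0 /\
  forall (k : nat) (W : T -> R),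
    is_condexp (F_Z Z (- k%:Z) k%:Z) (Y 0%R) W -> (L2dist (Y 0%R) W <= (nu k)%:E)%E.

(* Same notion, but only requiring the bound for some version of the
   conditional expectation (equivalent, by a.s. uniqueness and existence
   of conditional expectations of integrable variables). *)
Definition L2NED_some {dS : measure_display} {S : measurableType dS}
  (Y : int -> T -> R) (Z : int -> T -> S) (nu : nat -> R) : Prop :=
  stationary Y /\ nu @ \oo --> 0 /\
  forall k : nat, exists W : T -> R,
    is_condexp (F_Z Z (- k%:Z) k%:Z) (Y 0%R) W /\ (L2dist (Y 0%R) W <= (nu k)%:E)%E.

Definition p_variation (p : nat) (g : R -> R) (X0 : T -> R) (c : R) : Prop :=
  forall eps : R, 0 < eps ->
    (\int[P]_w ereal_sup [set ((`|g x - g (X0 w)| ^+ p)%R)%:E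
                          | x in [set x : R | (`|x - X0 w| <= eps)%R]]
     <= (c * eps ^+ p)%:E)%E.

End NED.

(* Let X' be a version of E[X_0 | F_{-k,k}] with ||X_0 - X'||_2 <= nu(k). A
   conditional expectation is the best L_2 approximation by bounded
   F_{-k,k}-measurable functions, and g(X') is one, so
   ||g(X_0) - E[g(X_0) | F_{-k,k}]||_2^2 <= E (g(X_0) - g(X'))^2. Where
   |X_0 - X'| <= eps the 2-variation condition bounds this by L eps^2, elsewhere
   the integrand is at most 4K^2 <= 4K^2 (X_0 - X')^2 / eps^2; choosing
   eps^2 = nu(k) gives (L + 4K^2) nu(k).
   Conditional expectations are only characterised by their integrals over
   F-sets, so the orthogonality E[(Y - E[Y | F]) V] = 0 for bounded
   F-measurable V is obtained by approximating V uniformly by F-simple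
   functions. *)

From HB Require Import structures.
From mathcomp Require Import all_boot all_order all_algebra.
From mathcomp Require Import all_classical all_reals all_analysis.
From mathcomp Require Import measurable_realfun.
From mathcomp Require Import ring lra zify.
Import Order.TTheory GRing.Theory Num.Theory.
Local Open Scope classical_set_scope.
Local Open Scope ring_scope.

Set Implicit Arguments. Unset Strict Implicit. Unset Printing Implicit Defensive.

Section measurable_wrt.
Context {d : measure_display} {T : measurableType d} {R : realType}.
Variable F : set (set T).

(* F is an arbitrary family of sets, not the sigma-algebra of a measurableType. *)
Definition measurable_wrt (V : T -> R) := forall B, measurable B -> F (V @^-1` B).

Lemma measurable_wrt_comp (phi : R -> R) V :
  measurable_fun setT phi -> measurable_wrt V -> measurable_wrt (fun x => phi (V x)).
Proof.
move=> mphi FV B mB; rewrite comp_preimage; apply: FV.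
by have := mphi measurableT B mB; rewrite setTI.
Qed.

Hypothesis F_measurable : forall A, F A -> measurable A.

Lemma measurable_wrt_measurable V : measurable_wrt V -> measurable_fun setT V.
Proof. by move=> FV _ B mB; rewrite setTI; exact/F_measurable/FV. Qed.

End measurable_wrt.

Section bounded_integrable.
Context {d : measure_display} {T : measurableType d} {R : realType}.

Lemma bounded_fun_norm_le (f : T -> R) M :
  (forall x, `|f x| <= M) -> [bounded f x | x in setT].
Proof.
move=> fM; exists M; split; first exact: num_real.
by move=> y My x _; exact: le_trans (fM x) (ltW My).
Qed.

Lemma integrableM_bounded (mu : {measure set T -> \bar R}) (U V : T -> R) M :
  mu.-integrable setT (EFin \o U) -> measurable_fun setT V ->
  (forall x, `|V x| <= M) -> mu.-integrable setT (EFin \o (U \* V)).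
Proof.
move=> iU mV VM; have := integrableMl measurableT iU mV (bounded_fun_norm_le VM).
by apply: eq_integrable => // x _; rewrite /= EFinM.
Qed.

Lemma finite_measure_bounded_integrable (mu : {finite_measure set T -> \bar R})
    (f : T -> R) M :
  measurable_fun setT f -> (forall x, `|f x| <= M) ->
  mu.-integrable setT (EFin \o f).
Proof.
move=> mf fM; apply: measurable_bounded_integrable => //.
  by rewrite ltey_eq fin_num_measure.
exact: bounded_fun_norm_le fM.
Qed.

Lemma finite_measure_bounded_sqr_integrable (mu : {finite_measure set T -> \bar R})
    (f : T -> R) M :
  measurable_fun setT f -> (forall x, `|f x| <= M) ->
  mu.-integrable setT (EFin \o (fun x => f x ^+ 2)).
Proof.
move=> mf fM; have fM2 x : `|f x ^+ 2| <= M ^+ 2.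
  by rewrite normrX lerXn2r ?nnegrE ?(le_trans _ (fM x)).
exact: finite_measure_bounded_integrable (measurable_funX 2 mf) fM2.
Qed.

End bounded_integrable.

Section floor_step.
Variable R : archiRealFieldType.

Lemma floor_mul_dist (v e : R) : 0 < e -> `|v - (Num.floor (v / e))%:~R * e| <= e.
Proof.
move=> e0; have /andP[fl fu] := floor_itv (v / e).
rewrite ler_pdivlMr // in fl; rewrite ltr_pdivrMr // intrD mulrDl mul1r in fu.
rewrite ler_norml; apply/andP; split; lra.
Qed.

Lemma floor_div_range (v M e : R) (m : nat) : 0 < e -> `|v| <= M -> M / e < m%:R ->
  exists j : 'I_(2 * m), Num.floor (v / e) = j%:Z - m%:Z.
Proof.
move=> e0 vM Mm; set z := Num.floor (v / e).
have [vlo vhi] : - M <= v /\ v <= M by move: vM; rewrite ler_norml => /andP.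
have vMe : - (M / e) <= v / e <= M / e.
  by rewrite -mulNr !ler_pM2r ?invr_gt0 // vlo vhi.
have zlo : (- m%:Z < z + 1)%R.
  rewrite -(ltr_int R) intrN intrD; have := floorD1_gt (v / e).
  rewrite intrD -/z; lra.
have zhi : (z < m%:Z)%R by rewrite /z floor_lt_int; lra.
have hj : (absz (z + m%:Z)%R < 2 * m)%N by lia.
by exists (Ordinal hj) => /=; lia.
Qed.

Lemma floor_step_sum (T : Type) (f : T -> R) M e m : 0 < e ->
    (forall x, `|f x| <= M) -> M / e < m%:R ->
  forall x, (Num.floor (f x / e))%:~R * e =
    \sum_(j < 2 * m) (j%:Z - m%:Z)%:~R * e *
                     \1_[set y | Num.floor (f y / e) = j%:Z - m%:Z] x.
Proof.
move=> e0 fM Mm x; have [j0 fj0] := floor_div_range e0 (fM x) Mm.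
rewrite (bigD1 j0) //= big1 ?addr0.
  by rewrite indicE mem_set // mulr1 fj0.
move=> j jj0; rewrite indicE memNset ?mulr0 //= fj0 => eqj.
by move/eqP: jj0; apply; apply: val_inj => /=; lia.
Qed.

End floor_step.

Section orthogonality.
Context {d : measure_display} {T : measurableType d} {R : realType}.
Variables (mu : {measure set T -> \bar R}) (F : set (set T)).
Hypothesis F_measurable : forall A, F A -> measurable A.
Variable U : T -> R.
Hypothesis intU : mu.-integrable setT (EFin \o U).
Hypothesis U_orth : forall A, F A -> (\int[mu]_(x in A) (U x)%:E = 0)%E.

Lemma integral_mul_sum_indic_eq0 n (c : 'I_n -> R) (A : 'I_n -> set T) :
  (forall j, F (A j)) ->
  (\int[mu]_x (U x * \sum_(j < n) c j * \1_(A j) x)%:E = 0)%E.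
Proof.
move=> FA.
have intUA j : mu.-integrable setT (EFin \o (U \* \1_(A j))).
  apply: (integrableM_bounded (M := 1)) => // [|x].
    exact/measurable_indic/F_measurable.
  by rewrite indicE; case: (x \in A j); rewrite ?normr1 ?normr0.
under eq_integral => x _ do rewrite mulr_sumr -sumEFin.
rewrite integral_sum //; last first.
  move=> j; have := integrableZl measurableT (c j) (intUA j).
  by apply: eq_integrable => // x _; rewrite /= -EFinM mulrCA.
apply: big1 => j _.
under eq_integral => x _ do rewrite mulrCA EFinM.
rewrite integralZl //; last exact: intUA.
rewrite -[RHS](mule0 (c j)%:E); congr (_ * _)%E.
rewrite -(U_orth (FA j)) (integral_mkcond (A j)); apply: eq_integral => x _.
by rewrite patchE indicE; case: (x \in A j); rewrite ?mulr1 ?mulr0.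
Qed.

Lemma abs_integral_mul_le V M e : measurable_wrt F V ->
    (forall x, `|V x| <= M) -> 0 < e ->
  (`|\int[mu]_x (U x * V x)%:E| <= e%:E * \int[mu]_x (`|U x|)%:E)%E.
Proof.
(* V is e-close to the F-simple function floor(V / e) e, which U integrates to 0. *)
move=> FV VM e0; set m := (Num.truncn (M / e)).+1.
have Mm : M / e < m%:R by exact: truncnS_gt.
pose A (j : 'I_(2 * m)) := [set y | Num.floor (V y / e) = j%:Z - m%:Z].
have FA j : F (A j).
  have -> : A j = ((fun y => y / e) \o V) @^-1`
                   `[(j%:Z - m%:Z)%:~R, (j%:Z - m%:Z + 1)%:~R[.
    by apply/seteqP; split => y /=; rewrite in_itv /= -floor_eq => /eqP.
  by apply: measurable_wrt_comp FV _ (measurable_itv _); exact: mulrr_measurable.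
pose Vs x := \sum_(j < 2 * m) (j%:Z - m%:Z)%:~R * e * \1_(A j) x.
have VsE x : Vs x = (Num.floor (V x / e))%:~R * e.
  by rewrite (floor_step_sum e0 VM Mm).
have VVs x : `|V x - Vs x| <= e by rewrite VsE floor_mul_dist.
have mV := measurable_wrt_measurable F_measurable FV.
have mVs : measurable_fun setT Vs.
  apply: measurable_sum => j; apply: measurable_funM => //.
  exact/measurable_indic/F_measurable.
have VsM x : `|Vs x| <= M + e.
  have -> : Vs x = V x - (V x - Vs x) by ring.
  by apply: le_trans (ler_normB _ _) _; rewrite lerD.
have mU : measurable_fun setT U by exact/measurable_EFinP/measurable_int/intU.
have -> : (\int[mu]_x (U x * V x)%:E = \int[mu]_x (U x * (V x - Vs x))%:E)%E.
  rewrite -[LHS]sube0 -(integral_mul_sum_indic_eq0 (fun j => (j%:Z - m%:Z)%:~R * e) FA).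
  rewrite -integralB_EFin //; last 2 first.
  - exact: integrableM_bounded intU mV VM.
  - exact: integrableM_bounded intU mVs VsM.
  by apply: eq_integral => x _; rewrite mulrBr.
apply: le_trans (le_abse_integral _ _ _) _ => //.
  by apply/measurable_EFinP/measurable_funM => //; exact: measurable_funB.
rewrite -ge0_integralZl_EFin ?(ltW e0) //; last first.
  by do 2 apply: measurableT_comp => //.
apply: ge0_le_integral => //.
- apply/measurable_EFinP/measurableT_comp => //.
  exact/measurable_funM/measurable_funB.
- by apply: emeasurable_funM => //; do 2 apply: measurableT_comp => //.
- by move=> x _; rewrite /= -EFinM lee_fin normrM mulrC ler_wpM2r.
Qed.

Lemma integral_mul_measurable_wrt_eq0 V M : measurable_wrt F V ->
  (forall x, `|V x| <= M) -> (\int[mu]_x (U x * V x)%:E = 0)%E.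
Proof.
move=> FV VM; set C := (\int[mu]_x (`|U x|)%:E)%E.
have C0 : (0 <= C)%E by apply: integral_ge0 => x _; rewrite lee_fin.
have finC : C \is a fin_num.
  apply: (integrable_fin_num measurableT).
  by apply: eq_integrable (integrable_abse intU) => // x _.
apply/eqP; rewrite -abse_eq0 eq_le abse_ge0 andbT; apply/lee_addgt0Pr => r r0.
rewrite add0e; set c := fine C.
have c0 : 0 <= c by rewrite fine_ge0.
apply: le_trans (abs_integral_mul_le (e := r / (c + 1)) FV VM _) _.
  by rewrite divr_gt0 // ltr_wpDl.
rewrite -/C -(fineK finC) -/c -EFinM lee_fin mulrAC ler_pdivrMr ?ltr_wpDl //; nra.
Qed.

End orthogonality.

Lemma integral_sqr_le_add_orth {d : measure_display} {T : measurableType d}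
    {R : realType} (mu : {finite_measure set T -> \bar R}) (F : set (set T))
    (U V1 V2 : T -> R) M M1 M2 :
    (forall A, F A -> measurable A) ->
    measurable_fun setT U -> (forall x, `|U x| <= M) ->
    (forall A, F A -> (\int[mu]_(x in A) (U x)%:E = 0)%E) ->
    measurable_wrt F V1 -> (forall x, `|V1 x| <= M1) ->
    measurable_wrt F V2 -> (forall x, `|V2 x| <= M2) ->
  (\int[mu]_x (U x ^+ 2)%:E <= \int[mu]_x ((U x + (V1 x - V2 x)) ^+ 2)%:E)%E.
Proof.
move=> F_meas mU UM U_orth FV1 V1M FV2 V2M.
have iU := finite_measure_bounded_integrable mu mU UM.
have mV1 := measurable_wrt_measurable F_meas FV1.
have mV2 := measurable_wrt_measurable F_meas FV2.
have mV := measurable_funB mV1 mV2.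
have VM x : `|V1 x - V2 x| <= M1 + M2 by apply: le_trans (ler_normB _ _) (lerD _ _).
have UV0 : (\int[mu]_x (U x * (V1 x - V2 x))%:E = 0)%E.
  under eq_integral do rewrite mulrBr EFinB.
  rewrite integralB_EFin //; last 2 first.
  - exact: integrableM_bounded iU mV1 V1M.
  - exact: integrableM_bounded iU mV2 V2M.
  by rewrite !(integral_mul_measurable_wrt_eq0 F_meas iU U_orth FV1 V1M,
               integral_mul_measurable_wrt_eq0 F_meas iU U_orth FV2 V2M) subee.
have iU2 := finite_measure_bounded_sqr_integrable mu mU UM.
have iUV : mu.-integrable setT (EFin \o (fun x => 2 * (U x * (V1 x - V2 x)))).
  have := integrableZl measurableT 2 (integrableM_bounded iU mV VM).
  by apply: eq_integrable => // x _; rewrite /= EFinM.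
have <- : (\int[mu]_x (U x ^+ 2 + 2 * (U x * (V1 x - V2 x)))%:E =
           \int[mu]_x (U x ^+ 2)%:E)%E.
  under eq_integral do rewrite EFinD.
  rewrite integralD // -[RHS]adde0; congr (_ + _)%E.
  under eq_integral do rewrite EFinM.
  by rewrite integralZl ?UV0 ?mule0 //; exact: integrableM_bounded iU mV VM.
apply: le_integral => //.
- by apply: (eq_integrable _ _ _ _ (integrableD measurableT iU2 iUV)) => // x _.
- apply: (finite_measure_bounded_sqr_integrable _ (measurable_funD mU mV)) => x.
  by apply: le_trans (ler_normD _ _) (lerD (UM x) (VM x)).
- move=> x _; rewrite lee_fin -subr_ge0.
  have -> : (U x + (V1 x - V2 x)) ^+ 2 - (U x ^+ 2 + 2 * (U x * (V1 x - V2 x))) =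
            (V1 x - V2 x) ^+ 2 by ring.
  exact: sqr_ge0.
Qed.

Section condexp.
Context {d : measure_display} {T : measurableType d} {R : realType}.
Variables (P : probability T R) (F : set (set T)).
Hypothesis F_measurable : forall A, F A -> measurable A.

Lemma condexp_opp Y W : is_condexp P F Y W ->
  is_condexp P F (fun x => - Y x) (fun x => - W x).
Proof.
have EFinN1 (f : T -> R) x : (- f x)%:E = ((-1)%:E * (f x)%:E)%E.
  by rewrite -EFinM mulN1r.
have intN f : P.-integrable setT (EFin \o f) ->
    P.-integrable setT (EFin \o (fun x => - f x)).
  move=> /(integrableZl measurableT (-1)); apply: eq_integrable => // x _.
  by rewrite /= EFinN1.
move=> [iY [FW [iW YW]]]; split; [exact: intN | split; [|split]].
- by apply: measurable_wrt_comp FW; exact: oppr_measurable.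
- exact: intN.
- move=> A FA; have mA := F_measurable FA.
  have iYA : P.-integrable A (EFin \o Y) by exact: integrableS iY.
  have iWA : P.-integrable A (EFin \o W) by exact: integrableS iW.
  under eq_integral do rewrite EFinN1.
  under [RHS]eq_integral do rewrite EFinN1.
  by rewrite !integralZl ?YW.
Qed.

Lemma condexp_ae_le Y W K : is_condexp P F Y W -> (forall x, Y x <= K) ->
  {ae P, forall x, W x <= K}.
Proof.
move=> [iY [FW [iW YW]]] YK.
pose A := W @^-1` `]K, +oo[.
have FA : F A by apply: FW; exact: measurable_itv.
have mA := F_measurable FA.
have AWK x : A x = (K < W x) by rewrite /A /= in_itv /= andbT.
have iK : P.-integrable A (EFin \o cst K) by exact: finite_measure_integrable_cst.
have iWA : P.-integrable A (EFin \o W) by exact: integrableS iW.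
have iYA : P.-integrable A (EFin \o Y) by exact: integrableS iY.
have mWK : measurable_fun A (fun x => (W x - K)%:E).
  apply/measurable_EFinP/measurable_funB => //.
  exact/measurable_EFinP/measurable_int/iWA.
have intWK0 : (\int[P]_(x in A) `|(W x - K)%:E| = 0)%E.
  apply/eqP; rewrite eq_le integral_ge0 ?andbT //.
  rewrite (eq_integral (fun x => (W x)%:E - K%:E))%E; last first.
    move=> x /set_mem; rewrite AWK => /ltW KW.
    by rewrite gee0_abs ?lee_fin ?subr_ge0 // EFinB.
  rewrite integralB_EFin // -YW // -integralB_EFin // -(integral0 P A).
  apply: le_integral => //; first exact: integrableB.
    by apply: eq_integrable (finite_measure_integrable_cst P 0 mA) => // x _.
  by move=> x _; rewrite /= -EFinB lee_fin subr_le0.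
have := (ae_eq_integral_abs P mA mWK).1 intWK0.
apply: filterS => x /= WK0; rewrite leNgt; apply/negP => KW.
rewrite AWK in WK0; have /eqP := WK0 KW.
by rewrite eqe subr_eq0 gt_eqF.
Qed.

Lemma condexp_ae_norm_le Y W K : is_condexp P F Y W ->
  (forall x, `|Y x| <= K) -> {ae P, forall x, `|W x| <= K}.
Proof.
move=> YW YK.
have WK := condexp_ae_le YW (fun x => le_trans (ler_norm _) (YK x)).
have NWK : {ae P, forall x, - W x <= K}.
  apply: condexp_ae_le (condexp_opp YW) _ => x.
  by apply: le_trans (YK x); rewrite -normrN ler_norm.
by apply: filterS2 WK NWK => x; rewrite ler_norml lerNl => -> ->.
Qed.

Lemma condexp_sub_orth Y W : is_condexp P F Y W ->
  forall A, F A -> (\int[P]_(x in A) (Y x - W x)%:E = 0)%E.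
Proof.
move=> [iY [_ [iW YW]]] A FA; have mA := F_measurable FA.
have iWA : P.-integrable A (EFin \o W) by exact: integrableS iW.
under eq_integral do rewrite EFinB.
rewrite integralB_EFin ?YW ?subee //; last exact: integrableS iY.
exact: integrable_fin_num iWA.
Qed.

Lemma condexp_bounded_version Y W K : 0 <= K -> (forall x, `|Y x| <= K) ->
    is_condexp P F Y W ->
  exists W', [/\ is_condexp P F Y W', forall x, `|W' x| <= K &
                 {ae P, forall x, W x = W' x}].
Proof.
move=> K0 YK YW; have [iY [FW [iW YWA]]] := YW.
pose clamp x := Num.max (- K) (Num.min K x).
have mclamp : measurable_fun setT clamp.
  by apply: measurable_maxr => //; exact: measurable_minr.
have clampK x : `|clamp x| <= K.
  rewrite ler_norml le_max lexx ge_max ge_min lexx andbT; lra.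
have FW' : measurable_wrt F (fun x => clamp (W x)) := measurable_wrt_comp mclamp FW.
have mW' := measurable_wrt_measurable F_measurable FW'.
have mW := measurable_wrt_measurable F_measurable FW.
have WW' : {ae P, forall x, W x = clamp (W x)}.
  apply: filterS (condexp_ae_norm_le YW YK) => x; rewrite ler_norml => /andP[lo hi].
  by rewrite /clamp min_r // max_r.
exists (fun x => clamp (W x)); split => //.
split; [exact: iY | split; [exact: FW' | split]].
  exact: finite_measure_bounded_integrable mW' (fun x => clampK (W x)).
move=> A FA; have mA := F_measurable FA; rewrite YWA //.
apply: ae_eq_integral => //.
- by apply/measurable_EFinP; exact: measurable_funS mW.
- by apply/measurable_EFinP; exact: measurable_funS mW'.
- by apply: filterS WW' => x Wx _; congr EFin.
Qed.

Lemma integral_sqr_sub_bounded_condexp_le (Y W h : T -> R) K :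
    measurable_fun setT Y -> (forall x, `|Y x| <= K) ->
    is_condexp P F Y W -> (forall x, `|W x| <= K) ->
    measurable_wrt F h -> (forall x, `|h x| <= K) ->
  (\int[P]_x ((Y x - W x) ^+ 2)%:E <= \int[P]_x ((Y x - h x) ^+ 2)%:E)%E.
Proof.
move=> mY YK YW WK Fh hK.
have mW := measurable_wrt_measurable F_measurable YW.2.1.
have YWK x : `|Y x - W x| <= K + K by apply: le_trans (ler_normB _ _) (lerD _ _).
have <- : (\int[P]_x ((Y x - W x + (W x - h x)) ^+ 2)%:E =
           \int[P]_x ((Y x - h x) ^+ 2)%:E)%E.
  by apply: eq_integral => x _; rewrite addrA subrK.
exact: integral_sqr_le_add_orth F_measurable (measurable_funB mY mW) YWK
  (condexp_sub_orth YW) YW.2.1 WK Fh hK.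
Qed.

Lemma integral_sqr_sub_condexp_le (Y W h : T -> R) K : 0 <= K ->
    measurable_fun setT Y -> (forall x, `|Y x| <= K) -> is_condexp P F Y W ->
    measurable_wrt F h -> (forall x, `|h x| <= K) ->
  (\int[P]_x ((Y x - W x) ^+ 2)%:E <= \int[P]_x ((Y x - h x) ^+ 2)%:E)%E.
Proof.
move=> K0 mY YK YW Fh hK.
have [W' [YW' W'K WW']] := condexp_bounded_version K0 YK YW.
have mW := measurable_wrt_measurable F_measurable YW.2.1.
have mW' := measurable_wrt_measurable F_measurable YW'.2.1.
rewrite (ae_eq_integral (fun x => ((Y x - W' x) ^+ 2)%:E)) //.
- exact: integral_sqr_sub_bounded_condexp_le.
- by apply/measurable_EFinP/measurable_funX/measurable_funB.
- by apply/measurable_EFinP/measurable_funX/measurable_funB.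
- by apply: filterS WW' => x Wx _; rewrite Wx.
Qed.

End condexp.

Section variation.
Context {d : measure_display} {T : measurableType d} {R : realType}.

(* The supremum in [p_variation] need not be measurable. *)
Lemma ge0_le_integral_nonmeasurable (mu : {measure set T -> \bar R})
    (f g : T -> \bar R) :
  (forall x, (0 <= f x)%E) -> (forall x, (f x <= g x)%E) ->
  (\int[mu]_x f x <= \int[mu]_x g x)%E.
Proof.
move=> f0 fg; have g0 x : (0 <= g x)%E := le_trans (f0 x) (fg x).
rewrite !ge0_integralTE //; apply: ereal_sup_le => _ [h hf <-].
by exists h => //= x; exact: le_trans (hf x) (fg x).
Qed.

Lemma sqr_sub_le_variation_sup (g : R -> R) (x0 y eps : R) : `|x0 - y| <= eps ->
  (((g x0 - g y) ^+ 2)%:E <=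
   ereal_sup [set (`|g x - g x0| ^+ 2)%:E | x in [set x | (`|x - x0| <= eps)%R]])%E.
Proof.
move=> y_near; apply: ereal_sup_ubound; exists y; first by rewrite /= distrC.
by rewrite distrC real_normK ?num_real.
Qed.

Lemma sqr_sub_le_far (g : R -> R) (K eps u v : R) : (forall x, `|g x| <= K) ->
  0 < eps -> eps < `|u - v| -> (g u - g v) ^+ 2 <= 4 * K ^+ 2 / eps ^+ 2 * (u - v) ^+ 2.
Proof.
move=> gK eps0 far; have K0 : 0 <= K := le_trans (normr_ge0 _) (gK 0).
have : (g u - g v) ^+ 2 <= 4 * K ^+ 2.
  have uvK : `|g u - g v| <= K + K by apply: le_trans (ler_normB _ _) (lerD _ _).
  rewrite -real_normK ?num_real // (_ : 4 * K ^+ 2 = (K + K) ^+ 2); last by ring.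
  by rewrite lerXn2r ?nnegrE ?addr_ge0.
move/le_trans; apply; rewrite -mulrA ler_peMr ?mulr_ge0 ?sqr_ge0 //.
rewrite ler_pdivlMl ?exprn_gt0 // mulr1 -[(u - v) ^+ 2]real_normK ?num_real //.
by rewrite lerXn2r ?nnegrE ?(ltW eps0) // ltW.
Qed.

Variable P : probability T R.

Lemma integral_near_sqr_sub_le_variation (g : R -> R) (X0 X1 : T -> R) (L eps : R) :
    0 < eps -> p_variation P 2 g X0 L ->
  (\int[P]_(x in [set x | (`|X0 x - X1 x| <= eps)%R]) ((g (X0 x) - g (X1 x)) ^+ 2)%:E
   <= (L * eps ^+ 2)%:E)%E.
Proof.
move=> eps0 gvar; apply: le_trans (gvar eps eps0); rewrite integral_mkcond.
apply: ge0_le_integral_nonmeasurable => x.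
  by rewrite patchE; case: ifP; rewrite lee_fin ?sqr_ge0.
rewrite patchE; case: ifPn => [/set_mem|_]; first exact: sqr_sub_le_variation_sup.
apply: le_trans (ereal_sup_ubound _); last first.
  by exists (X0 x); rewrite //= subrr normr0 ltW.
by rewrite /= subrr normr0 expr0n.
Qed.

Lemma integral_sqr_sub_comp_le (g : R -> R) (X0 X1 : T -> R) (K L eps : R) :
    measurable_fun setT g -> measurable_fun setT X0 -> measurable_fun setT X1 ->
    (forall x, `|g x| <= K) -> 0 < eps -> p_variation P 2 g X0 L ->
  (\int[P]_x ((g (X0 x) - g (X1 x)) ^+ 2)%:E <=
   (L * eps ^+ 2)%:E +
   (4 * K ^+ 2 / eps ^+ 2)%:E * \int[P]_x ((X0 x - X1 x) ^+ 2)%:E)%E.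
Proof.
move=> mg mX0 mX1 gK eps0 gvar.
pose A := [set x | `|X0 x - X1 x| <= eps].
have mA : measurable A.
  have := measurableT_comp (@normr_measurable R setT) (measurable_funB mX0 mX1).
  by move=> /(_ measurableT _ (measurable_itv `]-oo, eps])); rewrite setTI.
have mq : measurable_fun setT (fun x => ((g (X0 x) - g (X1 x)) ^+ 2)%:E).
  by apply/measurable_EFinP/measurable_funX/measurable_funB; exact: measurableT_comp.
have mD : measurable_fun setT (fun x => ((X0 x - X1 x) ^+ 2)%:E).
  by apply/measurable_EFinP/measurable_funX/measurable_funB.
rewrite -(setUCr A) ge0_integral_setU ?setUCr //; last 3 first.
- exact: measurableC.
- by move=> x _; rewrite lee_fin sqr_ge0.
- by apply/disj_setPS; rewrite setICr.
apply: leeD; first exact: integral_near_sqr_sub_le_variation.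
have c0 : 0 <= 4 * K ^+ 2 / eps ^+ 2 by rewrite divr_ge0 ?sqr_ge0 // mulr_ge0 ?sqr_ge0.
have mcD := emeasurable_funM (measurable_cst (4 * K ^+ 2 / eps ^+ 2)%:E) mD.
have cD0 x : (0 <= (4 * K ^+ 2 / eps ^+ 2)%:E * ((X0 x - X1 x) ^+ 2)%:E)%E.
  by rewrite -EFinM lee_fin mulr_ge0 ?sqr_ge0.
rewrite -ge0_integralZl_EFin //; last by move=> x _; rewrite lee_fin sqr_ge0.
apply: (le_trans _ (ge0_subset_integral _ (measurableC mA) measurableT _ _
  (subsetT _))) => //.
apply: ge0_le_integral => //.
- exact: measurableC.
- by move=> x _; rewrite lee_fin sqr_ge0.
- exact: measurable_funS mq.
- exact: measurable_funS mcD.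
move=> x /= far; rewrite -EFinM lee_fin; apply: sqr_sub_le_far => //.
by rewrite ltNge; apply/negP.
Qed.

End variation.

Lemma lee_tradeoff_eps (R : realType) (Q D : \bar R) (L c v : R) :
    0 <= c -> 0 <= v -> (0 <= D <= (v ^+ 2)%:E)%E ->
    (forall eps : R, 0 < eps -> (Q <= (L * eps ^+ 2)%:E + (c / eps ^+ 2)%:E * D)%E) ->
  (Q <= ((L + c) * v)%:E)%E.
Proof.
move=> c0 v0 /andP[D0 Dv] QLD.
have finD : D \is a fin_num by rewrite ge0_fin_numE // (le_lt_trans Dv) ?ltry.
rewrite -(fineK finD) lee_fin in Dv; move: QLD; rewrite -(fineK finD).
set r := fine D => QLD; have r0 : 0 <= r by rewrite fine_ge0.
(* eps^2 = v + delta: the optimal eps^2 = v, moved away from 0. *)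
apply/lee_addgt0Pr => e e0; set delta := e / (`|L| + 1).
have delta0 : 0 < delta by rewrite divr_gt0 // ltr_wpDl.
have vd0 : 0 < v + delta by rewrite ltr_wpDl.
have := QLD (Num.sqrt (v + delta)); rewrite sqrtr_gt0 (sqr_sqrtr (ltW vd0)) => /(_ vd0).
move/le_trans; apply; rewrite -EFinM -!EFinD lee_fin.
have Ldelta : `|L| * delta <= e.
  rewrite /delta mulrA ler_pdivrMr ?ltr_wpDl //; nra.
have cr : c / (v + delta) * r <= c * v.
  rewrite mulrAC ler_pdivrMr // -mulrA ler_wpM2l //.
  by apply: le_trans Dv _; rewrite expr2 ler_wpM2l // lerDl (ltW delta0).
have LvL : L * (v + delta) <= L * v + `|L| * delta.
  by rewrite mulrDr lerD2l; exact: (ler_wpM2r (ltW delta0) (ler_norm L)).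
lra.
Qed.

Section L2dist.
Context {d : measure_display} {T : measurableType d} {R : realType}.
Variable P : probability T R.

Lemma L2dist_sqr (Y W : T -> R) :
  (L2dist P Y W `^ 2 = \int[P]_x ((Y x - W x) ^+ 2)%:E)%E.
Proof.
rewrite /L2dist poweR_Lnorm //; apply: eq_integral => x _.
by rewrite /= powR_mulrn ?real_normK ?num_real.
Qed.

Lemma L2dist_le_sqrt (Y W : T -> R) c :
  (\int[P]_x ((Y x - W x) ^+ 2)%:E <= c%:E)%E -> (L2dist P Y W <= (Num.sqrt c)%:E)%E.
Proof.
rewrite -L2dist_sqr; have : (0 <= L2dist P Y W)%E by exact: Lnorm_ge0.
case: (L2dist P Y W) => [n| |] //=.
- rewrite lee_fin => n0; rewrite powR_mulrn // => nc.
  by rewrite -(ger0_norm n0) -sqrtr_sqr; exact: ler_wsqrtr.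
- by rewrite pnatr_eq0.
Qed.

Lemma integral_sqr_le_L2dist (Y W : T -> R) v :
  (L2dist P Y W <= v%:E)%E -> (\int[P]_x ((Y x - W x) ^+ 2)%:E <= (v ^+ 2)%:E)%E.
Proof.
rewrite -L2dist_sqr; have : (0 <= L2dist P Y W)%E by exact: Lnorm_ge0.
case: (L2dist P Y W) => [n| |] //=; rewrite !lee_fin => n0 nv.
by rewrite powR_mulrn // lerXn2r ?nnegrE ?(le_trans n0).
Qed.

End L2dist.

Lemma F_Z_measurable {d : measure_display} {T : measurableType d}
    {dS : measure_display} {S : measurableType dS} (Z : int -> T -> S) (s t : int) :
  (forall n, measurable_fun setT (Z n)) -> forall A, F_Z Z s t A -> measurable A.
Proof.
move=> mZ; apply: smallest_sub; first exact: sigma_algebra_measurable.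
by move=> _ [u [B [_ mB ->]]]; have := mZ u measurableT B mB; rewrite setTI.
Qed.

Lemma stationary_comp {R : realType} {d : measure_display} {T : measurableType d}
    (P : probability T R) {dS dS' : measure_display} {S : measurableType dS}
    {S' : measurableType dS'} (Y : int -> T -> S) (g : S -> S') :
  stationary P Y -> measurable_fun setT g -> stationary P (fun n w => g (Y n w)).
Proof.
move=> [mY statY] mg; split=> [n|m t B h mB]; first exact: measurableT_comp.
have mgB i : measurable (g @^-1` B i).
  by have := mg measurableT (B i) (mB i); rewrite setTI.
exact: statY m t (fun i => g @^-1` B i) h mgB.
Qed.

Theorem lemma1 (R : realType) (d : measure_display) (T : measurableType d)
  (P : probability T R) (dS : measure_display) (S : measurableType dS)
  (X : int -> T -> R) (Z : int -> T -> S) (nu : nat -> R)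
  (g : R -> R) (K L : R) :
  stationary P Z ->
  L2NED_some P X Z nu ->
  measurable_fun setT g ->
  (forall x, `|g x| <= K) ->
  p_variation P 2 g (X 0) L ->
  L2NED P (fun n w => g (X n w)) Z
    (fun k => Num.sqrt ((L + 4 * K ^+ 2) * nu k)).
Proof.
move=> [mZ _] [statX [nu_cvg X_near]] mg gK gvar.
have K0 : 0 <= K := le_trans (normr_ge0 _) (gK 0).
split; [exact: stationary_comp | split].
  have prod_cvg : (fun k => (L + 4 * K ^+ 2) * nu k) @ \oo --> 0.
    by rewrite -(mulr0 (L + 4 * K ^+ 2)); exact: cvgMl_tmp.
  by have := cvg_comp _ _ prod_cvg (@sqrt_continuous R 0); rewrite sqrtr0.
move=> k W condW; have [X' [condX' X'_near]] := X_near k.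
have F_meas := F_Z_measurable (s := - k%:Z) (t := k%:Z) mZ.
have mX0 := statX.1 0; have FX' := condX'.2.1.
have mX' := measurable_wrt_measurable F_meas FX'.
have nu0 : 0 <= nu k by rewrite -lee_fin (le_trans (Lnorm_ge0 _ _ _) X'_near).
apply: L2dist_le_sqrt; apply: le_trans (integral_sqr_sub_condexp_le F_meas K0
  (measurableT_comp mg mX0) (fun x => gK _) condW (measurable_wrt_comp mg FX')
  (fun x => gK _)) _.
apply: (lee_tradeoff_eps (D := \int[P]_x ((X 0 x - X' x) ^+ 2)%:E)) nu0 _ _.
- by rewrite mulr_ge0 ?sqr_ge0.
- rewrite integral_sqr_le_L2dist ?andbT //.
  by apply: integral_ge0 => x _; rewrite lee_fin sqr_ge0.
- move=> eps eps0.
  exact: integral_sqr_sub_comp_le mg mX0 mX' gK eps0 gvar.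
Qed.
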